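(* Let $\nu$ be a Lévy measure on $\mathbb R$, let $\beta>0$, let $f\in l^\infty(\mathrm{supp}(\nu))\cap l^1(\mathrm{supp}(\nu))$ and let $k$ be a function on $\mathrm{supp}(\nu)$ which is bounded from above. Then the equation $$\varphi(x)=\exp\Big\{k(x)-\beta f(x)\int f(z)\varphi(z)\,\nu(dz)\Big\},\qquad x\in\mathrm{supp}(\nu),$$ defines a function $\varphi:\mathrm{supp}(\nu)\to\mathbb R$ in a well-defined (unique) way, and this $\varphi$ is bounded.
   Context: $l^\infty(\mathrm{supp}(\nu))\cap l^1(\mathrm{supp}(\nu))$ denotes the set of bounded, $\nu$-integrable real functions on the support of $\nu$. *)

From HB Require Import structures.
From mathcomp Require Import all_boot all_order all_algebra.
From mathcomp Require Import all_classical all_reals all_analysis.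
Set Implicit Arguments. Unset Strict Implicit. Unset Printing Implicit Defensive.
Import Order.TTheory GRing.Theory Num.Theory.
Import numFieldNormedType.Exports.
Local Open Scope classical_set_scope.
Local Open Scope ring_scope.

Definition levy_measure (R : realType) (nu : {measure set R -> \bar R}) : Prop :=
  nu [set 0] = 0%E /\
  (\int[nu]_x (Num.min 1 (x ^+ 2))%:E < +oo)%E.

Definition msupp (R : realType) (nu : {measure set R -> \bar R}) : set R :=
  [set x | forall e : R, 0 < e -> (0 < nu (ball x e))%E].

From HB Require Import structures.
From mathcomp Require Import all_boot all_order all_algebra.
From mathcomp Require Import all_classical all_reals all_analysis.
From mathcomp Require Import lra ring.
Set Implicit Arguments.
Unset Strict Implicit.
Unset Printing Implicit Defensive.

Import Order.TTheory GRing.Theory Num.Theory.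
Import numFieldNormedType.Exports.
Local Open Scope classical_set_scope.
Local Open Scope ring_scope.

(* With phi_of c x = exp(k x - beta f x c), the solutions of the equation are
   exactly the phi_of c for c a fixed point of integral_fphi c = \int f phi_of c.
   Since beta > 0, each f x * phi_of c x is nonincreasing in c, hence so is
   integral_fphi; and for |f| <= Mf, k <= Mk the integrand is dominated by
   exp(Mk + beta Mf |c|) |f|, which together with the Lipschitz bound of exp on
   bounded sets makes integral_fphi locally Lipschitz, hence continuous.  A
   continuous nonincreasing map of R has exactly one fixed point (intermediate
   value theorem applied to c - g c), and phi_of c <= exp(Mk + beta Mf |c|). *)

Lemma antitone_fixed_point_unique d (T : orderType d) (g : T -> T) (a b : T) :
  {homo g : x y /~ (x <= y)%O} -> g a = a -> g b = b -> a = b.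
Proof.
move=> g_anti; wlog ab : a b / (a <= b)%O => [wlog_ab ga gb|ga gb].
  by case: (leP a b) => [|/ltW] ?; [|apply/esym]; apply: wlog_ab.
by apply/le_anti; rewrite ab -{1}ga -gb g_anti.
Qed.

Lemma antitone_continuous_fixed_point (R : realType) (g : R -> R) :
  {homo g : x y /~ x <= y} -> continuous g -> exists c, g c = c.
Proof.
move=> g_anti g_cont; set A := `|g 0|.
have A_ge0 : 0 <= A := normr_ge0 _.
have [gA_le gA_ge] : g A <= g 0 /\ g 0 <= g (- A).
  by split; apply: g_anti; rewrite ?oppr_le0.
have /andP[ge_g0 le_g0] : - A <= g 0 <= A by rewrite -ler_norml.
have [c _ gc] : exists2 c, c \in `[- A, A] & c - g c = 0.
  apply: IVT; first by rewrite lerNl (le_trans _ A_ge0) // oppr_le0.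
  - apply: continuous_subspaceT => x; apply: cvgB; [exact: cvg_id | exact: g_cont].
  - rewrite ge_min le_max !subr_le0 !subr_ge0; apply/andP; split.
      by apply/orP; left; exact: le_trans ge_g0 gA_ge.
    by apply/orP; right; exact: le_trans gA_le le_g0.
by exists c; apply/eqP; rewrite eq_sym -subr_eq0 gc.
Qed.

Lemma continuous_locally_lipschitz (R : realType) (h : R -> R) :
  (forall B : R, exists2 L : R, 0 <= L & forall c c', `|c| <= B -> `|c'| <= B ->
     `|h c - h c'| <= L * `|c - c'|) -> continuous h.
Proof.
move=> h_lip c0; apply/cvgrPdist_le => e e_gt0.
have [L L_ge0 hL] := h_lip (`|c0| + 1).
have r_gt0 : 0 < Num.min 1 (e / (L + 1)).
  by rewrite lt_min ltr01 divr_gt0 // ltr_wpDl.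
apply/nbhs_ballP; exists (Num.min 1 (e / (L + 1))) => // t.
rewrite /ball /= lt_min => /andP[ct1 cte].
apply: le_trans (hL c0 t _ _) _; first by rewrite lerDl.
  by have := ler_normB c0 (c0 - t); rewrite opprB addrC subrK; lra.
rewrite ltr_pdivlMr ?ltr_wpDl // in cte.
have := normr_ge0 (c0 - t); nra.
Qed.

Lemma ler_dist_expR (R : realType) (u v : R) :
  `|expR u - expR v| <= expR (Num.max u v) * `|u - v|.
Proof.
wlog vu : u v / v <= u => [wlog_vu|].
  case: (leP v u) => [vu|/ltW uv]; first by have := wlog_vu u v vu; rewrite max_l.
  by have := wlog_vu v u uv; rewrite max_l // distrC (distrC v).
have expRv : expR v = expR u * expR (v - u) by rewrite -expRD addrC subrK.
rewrite max_l // expRv -{1}(mulr1 (expR u)) -mulrBr normrM ger0_norm ?expR_ge0 //.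
rewrite ler_wpM2l ?expR_ge0 // !ger0_norm ?subr_ge0 ?expR_le1 ?subr_le0 //.
by have := expR_ge1Dx (v - u); lra.
Qed.

Section self_consistency.
Context (R : realType) d (T : measurableType d) (mu : {measure set T -> \bar R}).
Variables (D : set T) (f k : T -> R) (beta Mf Mk : R).
Hypotheses (mD : measurable D) (beta_gt0 : 0 < beta) (Mf_ge0 : 0 <= Mf).
Hypotheses (f_le : forall x, D x -> `|f x| <= Mf).
Hypothesis intf : mu.-integrable D (EFin \o f).
Hypotheses (mk : measurable_fun D k) (k_le : forall x, D x -> k x <= Mk).

Definition phi_of (c : R) (x : T) := expR (k x - beta * f x * c).

Definition integral_fphi (c : R) := \int[mu]_(x in D) (f x * phi_of c x).

Let mf : measurable_fun D f.
Proof. by apply/measurable_realfun.measurable_EFinP; case/integrableP: intf. Qed.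

Let mnormf : measurable_fun D (fun x => `|f x|).
Proof. exact: measurableT_comp (@measurable_realfun.normr_measurable R setT) mf. Qed.

Lemma integrable_dominated (h : T -> R) (C : R) : measurable_fun D h ->
  (forall x, D x -> `|h x| <= C * `|f x|) -> mu.-integrable D (EFin \o h).
Proof.
move=> mh h_le; apply: (le_integrable mD (g := fun x => (C%:E * `|(f x)%:E|)%E)).
- exact/measurable_realfun.measurable_EFinP.
- by move=> x Dx /=; rewrite lee_fin (le_trans (h_le x Dx)) ?ler_norm.
- exact/integrableZl/integrable_abse.
Qed.

Lemma ler_norm_Rintegral_dominated (h : T -> R) (C : R) : 0 <= C ->
  measurable_fun D h -> (forall x, D x -> `|h x| <= C * `|f x|) ->
  `|\int[mu]_(x in D) h x| <= C * \int[mu]_(x in D) `|f x|.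
Proof.
move=> C_ge0 mh h_le.
apply: le_trans (le_normr_Rintegral mD (integrable_dominated mh h_le)) _.
rewrite -RintegralZl //; last first.
  by apply: (@integrable_dominated _ 1) => // x _; rewrite mul1r normr_id.
apply: le_Rintegral => //.
- apply: (@integrable_dominated _ C) => [|x Dx]; first exact: measurableT_comp.
  by rewrite normr_id h_le.
- apply: (@integrable_dominated _ C) => [|x Dx].
    exact: measurable_realfun.measurable_funM.
  by rewrite normrM normr_id ger0_norm.
Qed.

Lemma phi_of_exponent_le (c : R) (x : T) : D x ->
  k x - beta * f x * c <= Mk + beta * Mf * `|c|.
Proof.
move=> Dx; rewrite -mulrA -mulrA; apply: lerD; first exact: k_le.
rewrite -mulrN ler_pM2l //; apply: le_trans (ler_norm _) _.
by rewrite normrN normrM ler_wpM2r ?f_le.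
Qed.

Lemma measurable_fphi_of (c : R) : measurable_fun D (fun x => f x * phi_of c x).
Proof.
apply: measurable_realfun.measurable_funM => //.
apply: measurableT_comp; first exact: measurable_realfun.measurable_expR.
apply: measurable_realfun.measurable_funB => //.
apply: measurable_realfun.measurable_funM => //.
exact: measurable_realfun.measurable_funM.
Qed.

Lemma norm_fphi_of_le (c : R) (x : T) : D x ->
  `|f x * phi_of c x| <= expR (Mk + beta * Mf * `|c|) * `|f x|.
Proof.
move=> Dx; rewrite normrM (ger0_norm (expR_ge0 _)) mulrC ler_wpM2r //.
by rewrite ler_expR phi_of_exponent_le.
Qed.

Lemma integrable_fphi_of (c : R) :
  mu.-integrable D (EFin \o (fun x => f x * phi_of c x)).
Proof. exact: integrable_dominated (measurable_fphi_of c) (norm_fphi_of_le c). Qed.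

Lemma integral_fphi_nonincreasing : {homo integral_fphi : c c' /~ c <= c'}.
Proof.
move=> c' c cc'; apply: le_Rintegral; rewrite ?integrable_fphi_of // => x Dx.
have bfc : beta * f x * c' - beta * f x * c = beta * f x * (c' - c) by ring.
have [f_ge0|f_lt0] := lerP 0 (f x).
  rewrite ler_wpM2l // ler_expR lerB //.
  by rewrite -subr_ge0 bfc !mulr_ge0 ?subr_ge0 // ltW.
rewrite ler_nM2l // ler_expR lerB //.
by rewrite -subr_le0 bfc mulr_le0_ge0 ?subr_ge0 // pmulr_rle0 // ltW.
Qed.

Lemma integral_fphi_lipschitz (B c c' : R) : `|c| <= B -> `|c'| <= B ->
  `|integral_fphi c - integral_fphi c'| <=
    expR (Mk + beta * Mf * B) * (beta * Mf) * \int[mu]_(x in D) `|f x| * `|c - c'|.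
Proof.
move=> cB c'B; rewrite mulrAC -(mulrA _ _ `|_|).
rewrite /integral_fphi -RintegralB ?integrable_fphi_of //.
have BMf_ge0 : 0 <= beta * Mf := mulr_ge0 (ltW beta_gt0) Mf_ge0.
apply: ler_norm_Rintegral_dominated.
- exact: mulr_ge0 (expR_ge0 _) (mulr_ge0 BMf_ge0 (normr_ge0 _)).
- exact: measurable_realfun.measurable_funB (measurable_fphi_of c) (measurable_fphi_of c').
move=> x Dx; rewrite -mulrBr normrM mulrC ler_wpM2r //.
rewrite /phi_of; apply: le_trans (ler_dist_expR _ _) _.
have -> : k x - beta * f x * c - (k x - beta * f x * c') = beta * f x * (c' - c) by ring.
apply: ler_pM; rewrite ?expR_ge0 ?normr_ge0 //.
  rewrite ler_expR ge_max !(le_trans (phi_of_exponent_le _ Dx)) // lerD2l ler_wpM2l //.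
rewrite !normrM gtr0_norm // distrC.
by apply: ler_wpM2r => //; rewrite ler_pM2l ?f_le.
Qed.

Lemma continuous_integral_fphi : continuous integral_fphi.
Proof.
apply: continuous_locally_lipschitz => B.
have BMf_ge0 := mulr_ge0 (ltW beta_gt0) Mf_ge0.
exists (expR (Mk + beta * Mf * B) * (beta * Mf) * \int[mu]_(x in D) `|f x|).
  by rewrite mulr_ge0 ?Rintegral_ge0 // mulr_ge0 ?expR_ge0.
exact: integral_fphi_lipschitz.
Qed.

Lemma integral_fphi_solution (psi : T -> R) :
  let c := \int[mu]_(x in D) (f x * psi x) in
  (forall x, D x -> psi x = phi_of c x) -> integral_fphi c = c.
Proof. by move=> c psiE; apply: eq_Rintegral => x /[!inE] Dx; rewrite psiE. Qed.

Lemma norm_phi_of_le (c : R) (x : T) : D x ->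
  `|phi_of c x| <= expR (Mk + beta * Mf * `|c|).
Proof. by move=> Dx; rewrite ger0_norm ?expR_ge0 // ler_expR phi_of_exponent_le. Qed.

End self_consistency.

Lemma msupp_closed (R : realType) (nu : {measure set R -> \bar R}) :
  closed (msupp nu).
Proof.
move=> x clx e e_gt0; have e2_gt0 : 0 < e / 2 by rewrite divr_gt0.
have [y [Sy xy]] := clx (ball x (e / 2)) (nbhsx_ballx x (e / 2) e2_gt0).
apply: (lt_le_trans (Sy _ e2_gt0)); apply: le_measure; rewrite ?inE;
  try exact: measurable_realfun.measurable_ball.
by move=> z yz; rewrite (splitr e); exact: ball_triangle xy yz.
Qed.

Theorem lemma3p3 (R : realType) (nu : {measure set R -> \bar R})
  (beta : R) (f k : R -> R) :
  levy_measure nu ->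
  0 < beta ->
  (exists M : R, forall x, msupp nu x -> `|f x| <= M) ->
  nu.-integrable (msupp nu) (EFin \o f) ->
  measurable_fun (msupp nu) k ->
  (exists M : R, forall x, msupp nu x -> k x <= M) ->
  exists phi : R -> R,
    [/\ nu.-integrable (msupp nu) (fun z => (f z * phi z)%:E),
        (forall x, msupp nu x ->
           phi x = expR (k x - beta * f x *
                         Rintegral nu (msupp nu) (fun z => f z * phi z))),
        (forall psi : R -> R,
           (forall x, msupp nu x ->
              psi x = expR (k x - beta * f x *
                            Rintegral nu (msupp nu) (fun z => f z * psi z))) ->
           forall x, msupp nu x -> psi x = phi x) &
        (exists M : R, forall x, msupp nu x -> `|phi x| <= M)].
Proof.
move=> _ beta_gt0 [Mf f_bd] intf mk [Mk k_le].
have mS := measurable_realfun.closed_measurable (msupp_closed (nu := nu)).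
have f_le x : msupp nu x -> `|f x| <= Num.max Mf 0 by move=> ?; rewrite le_max f_bd.
have Mf_ge0 : 0 <= Num.max Mf 0 by rewrite le_max lexx orbT.
have G_anti := integral_fphi_nonincreasing mS beta_gt0 f_le intf mk k_le.
have G_cont := continuous_integral_fphi mS beta_gt0 Mf_ge0 f_le intf mk k_le.
have [c Gc] := antitone_continuous_fixed_point G_anti G_cont.
exists (phi_of f k beta c); split.
- exact: integrable_fphi_of mS beta_gt0 f_le intf mk k_le c.
- by move=> x _; rewrite [Rintegral _ _ _]Gc.
- move=> psi psiE x Sx; rewrite psiE //; congr expR; congr (_ - _ * _).
  exact: antitone_fixed_point_unique G_anti (integral_fphi_solution psiE) Gc.
- by exists (expR (Mk + beta * Num.max Mf 0 * `|c|)); exact: norm_phi_of_le.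
Qed.
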